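(* Let $X$ be a symmetric sequence space and $E$ a Banach sequence lattice on which all shifts $\tau_n$, $n\in\mathbb Z$, are bounded, with $k_-(E)<1$, such that $a\in X$ iff $\sum_{k=0}^\infty a^*_{2^k}e_{k+1}\in E$ and $\|a\|_X\asymp\|\sum_{k=0}^\infty a^*_{2^k}e_{k+1}\|_E$. Then the lower Boyd index satisfies $\alpha_X>0$.
   Context: A Banach sequence lattice is a Banach space $E$ of real sequences such that $x\in E$, $|y_k|\le|x_k|$ imply $y\in E$, $\|y\|_E\le\|x\|_E$. $u^*$ is the nonincreasing rearrangement of $(|u_k|)$. A symmetric sequence space is a Banach sequence lattice $X\subset\ell^\infty$ such that $x\in X$, $y^*=x^*$ imply $y\in X$, $\|y\|_X=\|x\|_X$; standing assumption: $X$ is separable or has the Fatou property. $\tau_nx=(x_{k-n})_{k\ge1}$, $x_j:=0$ for $j\notin\mathbb N$; $k_-(E)=\lim_n\|\tau_{-n}\|_E^{1/n}$. For $m\in\mathbb N$, $\sigma_{1/m}a=(\frac1m\sum_{k=(n-1)m+1}^{nm}a_k)_{n\ge1}$ and $\alpha_X=-\lim_{m\to\infty}\frac{\log_2\|\sigma_{1/m}\|_X}{\log_2m}$. $f\asymp g$ means two-sided estimates with constants independent of the arguments. *)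

From Stdlib Require Import Reals Lra Lia ZArith List.
From Coquelicot Require Import Coquelicot.
Open Scope R_scope.

(* Real sequences.  Index i : nat here stands for the paper's index i+1. *)
Definition seqR := nat -> R.

Definition sq_zero : seqR := fun _ => 0.
Definition sq_add (x y : seqR) : seqR := fun k => x k + y k.
Definition sq_sub (x y : seqR) : seqR := fun k => x k - y k.
Definition sq_scal (c : R) (x : seqR) : seqR := fun k => c * x k.

Definition sq_bounded (x : seqR) : Prop := exists M, forall k, Rabs (x k) <= M.

Definition is_banach_seq_lattice (E : seqR -> Prop) (nrm : seqR -> R) : Prop :=
  E sq_zero /\
  (forall x y, E x -> E y -> E (sq_add x y)) /\
  (forall c x, E x -> E (sq_scal c x)) /\
  (forall x, E x -> 0 <= nrm x) /\
  (forall x, E x -> nrm x = 0 -> forall k, x k = 0) /\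
  (forall c x, E x -> nrm (sq_scal c x) = Rabs c * nrm x) /\
  (forall x y, E x -> E y -> nrm (sq_add x y) <= nrm x + nrm y) /\
  (forall s : nat -> seqR, (forall n, E (s n)) ->
     (forall eps, 0 < eps -> exists N, forall m n, (N <= m)%nat -> (N <= n)%nat ->
         nrm (sq_sub (s m) (s n)) < eps) ->
     exists x, E x /\ forall eps, 0 < eps -> exists N, forall n, (N <= n)%nat ->
         nrm (sq_sub (s n) x) < eps) /\
  (forall x y, E x -> (forall k, Rabs (y k) <= Rabs (x k)) -> E y /\ nrm y <= nrm x).

(* "#{k : |u_k| > lam} <= i" *)
Definition count_gt_le (u : seqR) (lam : R) (i : nat) : Prop :=
  forall l : list nat, NoDup l -> List.Forall (fun k => lam < Rabs (u k)) l -> (length l <= i)%nat.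

(* nonincreasing rearrangement: rearr u i = u^*_{i+1}
   = inf { lam >= 0 : #{k : |u_k| > lam} < i+1 }  (meaningful for bounded u) *)
Definition rearr (u : seqR) : seqR :=
  fun i => real (Glb_Rbar (fun lam => 0 <= lam /\ count_gt_le u lam i)).

Definition separable_sp (X : seqR -> Prop) (nrm : seqR -> R) : Prop :=
  exists d : nat -> seqR, (forall n, X (d n)) /\
    forall x, X x -> forall eps, 0 < eps -> exists n, nrm (sq_sub x (d n)) < eps.

Definition fatou_prop (X : seqR -> Prop) (nrm : seqR -> R) : Prop :=
  forall (s : nat -> seqR) (x : seqR),
    (forall n, X (s n)) ->
    (forall n k, 0 <= s n k <= s (S n) k) ->
    (forall k, is_lim_seq (fun n => s n k) (x k)) ->
    (exists M, forall n, nrm (s n) <= M) ->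
    X x /\ is_lim_seq (fun n => nrm (s n)) (nrm x).

Definition is_symmetric_seq_space (X : seqR -> Prop) (nrm : seqR -> R) : Prop :=
  is_banach_seq_lattice X nrm /\
  (exists x, X x /\ exists k, x k <> 0) /\
  (forall x, X x -> sq_bounded x) /\
  (forall x y, X x -> sq_bounded y -> rearr y = rearr x -> X y /\ nrm y = nrm x) /\
  (separable_sp X nrm \/ fatou_prop X nrm).

(* seq_shift tau_n x = (x_{k-n})_k, x_j = 0 outside the index range *)
Definition seq_shift (n : Z) (x : seqR) : seqR :=
  fun i => let j := (Z.of_nat i - n)%Z in
           if (0 <=? j)%Z then x (Z.to_nat j) else 0.

Definition opnorm (E : seqR -> Prop) (nrm : seqR -> R) (T : seqR -> seqR) : R :=
  real (Lub_Rbar (fun r => exists x, E x /\ nrm x <= 1 /\ r = nrm (T x))).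

Definition bounded_op (E : seqR -> Prop) (nrm : seqR -> R) (T : seqR -> seqR) : Prop :=
  exists C, forall x, E x -> E (T x) /\ nrm (T x) <= C * nrm x.

Definition k_minus (E : seqR -> Prop) (nrm : seqR -> R) : Rbar :=
  Lim_seq (fun n => Rpower (opnorm E nrm (seq_shift (- Z.of_nat n)%Z)) (/ INR n)).

(* sigma_{1/m} a = (1/m sum_{k=(n-1)m+1}^{nm} a_k)_n *)
Definition sigma_avg (m : nat) (a : seqR) : seqR :=
  fun i => / INR m * sum_f_R0 (fun j => a (i * m + j)%nat) (pred m).

Definition boyd_alpha (X : seqR -> Prop) (nrm : seqR -> R) : Rbar :=
  Rbar_opp (Lim_seq (fun m => ln (opnorm X nrm (sigma_avg m)) / ln (INR m))).

(* sum_{k>=0} a^*_{2^k} e_{k+1} : the sequence whose k-th entry (paper index k+1)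
   is a^*_{2^k} (paper index 2^k, i.e. our index 2^k - 1) *)
Definition dyadic_seq (a : seqR) : seqR := fun k => rearr a (2 ^ k - 1)%nat.

(* Counting blocks of length m gives, for every J,
     (sigma_{1/m} a)^*_{2^k} <= a^*_{2^(k+J)} + (2*2^J/m) a^*_{2^(k-1)},
   i.e. the dyadic sequence of sigma_{1/m} a is dominated by
   tau_{-J} b + (2*2^J/m)(tau_1 b + b). As k_-(E) < 1, some tau_{-N} has norm
   rho < 1 on E, so ||tau_{-qN}|| <= rho^q. Taking J = qN and m >= 2^(2qN),
   the norm equivalence yields ||sigma_{1/m}||_X <= K th^q with
   th = max(rho, 2^-N) < 1, a power decay in m, whence alpha_X > 0. *)

From Pilot Require Import Defs.
From Stdlib Require Import Reals ZArith.
From Coquelicot Require Import Coquelicot.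
From Stdlib Require Import Lra Lia List FunctionalExtensionality Classical_Prop.
(* Re-import Defs so that [seq_shift] denotes the shift operator of Defs
   rather than the list lemma [List.seq_shift]. *)
Import Defs.
Open Scope R_scope.

(** * Nonincreasing rearrangement *)

Lemma rearr_nonneg u i : 0 <= rearr u i.
Proof.
  unfold rearr.
  destruct (Glb_Rbar_correct (fun lam => 0 <= lam /\ count_gt_le u lam i)) as [_ Hg].
  assert (H0 : Rbar_le 0 (Glb_Rbar (fun lam => 0 <= lam /\ count_gt_le u lam i))).
  { apply Hg. intros x [Hx _]. exact Hx. }
  destruct (Glb_Rbar _); simpl in *; lra.
Qed.

Lemma rearr_le u i lam : 0 <= lam -> count_gt_le u lam i -> rearr u i <= lam.
Proof.
  intros H0 Hc. unfold rearr.
  destruct (Glb_Rbar_correct (fun lam => 0 <= lam /\ count_gt_le u lam i)) as [Hlb Hg].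
  assert (H1 : Rbar_le 0 (Glb_Rbar (fun lam => 0 <= lam /\ count_gt_le u lam i))).
  { apply Hg. intros x [Hx _]. exact Hx. }
  assert (H2 := Hlb lam (conj H0 Hc)).
  destruct (Glb_Rbar _); simpl in *; lra.
Qed.

Lemma list_min_gt (f : nat -> R) g l :
  Forall (fun k => g < f k) l -> exists mu, g < mu /\ Forall (fun k => mu <= f k) l.
Proof.
  induction l as [|x l IH]; intros H.
  - exists (g + 1). split; [lra | constructor].
  - inversion H; subst. destruct (IH H3) as [mu [Hm Hf]].
    exists (Rmin mu (f x)). split.
    + apply Rmin_case; lra.
    + constructor; [apply Rmin_r|].
      eapply Forall_impl; [|exact Hf]. intros a Ha.
      apply Rle_trans with mu; [apply Rmin_l | exact Ha].
Qed.

Lemma rearr_count u i : sq_bounded u -> count_gt_le u (rearr u i) i.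
Proof.
  intros [M HM] l Hn Hf.
  destruct (list_min_gt (fun k => Rabs (u k)) _ l Hf) as [mu [Hmu Hf2]].
  set (S := fun lam => 0 <= lam /\ count_gt_le u lam i).
  assert (HS : S (Rmax M 0)).
  { split; [apply Rmax_r|]. intros [|x l'] _ Hf'; [simpl; lia|].
    inversion Hf'; subst. specialize (HM x).
    assert (Rmax M 0 >= M) by (apply Rle_ge, Rmax_l). lra. }
  destruct (Glb_Rbar_correct S) as [Hlb Hg].
  assert (Hex : exists lam, S lam /\ lam < mu).
  { apply NNPP. intros H.
    assert (Hl : Rbar_le mu (Glb_Rbar S)).
    { apply Hg. intros x Hx. simpl. destruct (Rle_lt_dec mu x); auto.
      exfalso; apply H; eauto. }
    assert (H2 := Hlb _ HS).
    unfold rearr in Hmu. fold S in Hmu.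
    destruct (Glb_Rbar S); simpl in *; lra. }
  destruct Hex as [lam [[H0 Hc] Hlt]].
  apply Hc; auto. eapply Forall_impl; [|exact Hf2]. intros a Ha; simpl in *; lra.
Qed.

(** * Block counting for the averaging operator *)

Definition rleb (x y : R) : bool := if Rle_dec x y then true else false.

Lemma rleb_true x y : rleb x y = true <-> x <= y.
Proof. unfold rleb; destruct (Rle_dec x y); split; intros; auto; try discriminate; lra. Qed.

Lemma rleb_false x y : rleb x y = false <-> y < x.
Proof. unfold rleb; destruct (Rle_dec x y); split; intros; auto; try discriminate; lra. Qed.

Lemma block_index_inj x y i j m :
  (i < m)%nat -> (j < m)%nat -> (x * m + i = y * m + j)%nat -> x = y.
Proof.
  intros Hi Hj He. destruct (Nat.lt_total x y) as [H|[H|H]]; auto; exfalso.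
  - assert (S x * m <= y * m)%nat by (apply Nat.mul_le_mono_r; lia). simpl in *; lia.
  - assert (S y * m <= x * m)%nat by (apply Nat.mul_le_mono_r; lia). simpl in *; lia.
Qed.

Lemma NoDup_flat_map_disjoint {A B} (g : A -> list B) l : NoDup l ->
  (forall x, In x l -> NoDup (g x)) ->
  (forall x y e, In x l -> In y l -> In e (g x) -> In e (g y) -> x = y) ->
  NoDup (flat_map g l).
Proof.
  induction l as [|x l IH]; intros Hn Hg Hi; simpl; [constructor|].
  inversion Hn; subst. apply NoDup_app.
  - apply Hg; simpl; auto.
  - apply IH; auto.
    + intros; apply Hg; simpl; auto.
    + intros x0 y0 e0 G1 G2 G3 G4. apply (Hi x0 y0 e0); simpl; auto.
  - intros e He1 He2. apply in_flat_map in He2 as [y [Hy Hey]].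
    assert (x = y) by (apply (Hi x y e); simpl; auto). subst. contradiction.
Qed.

Lemma length_flat_map_ge {A B} (g : A -> list B) l c :
  (forall x, In x l -> (c <= length (g x))%nat) ->
  (length l * c <= length (flat_map g l))%nat.
Proof.
  induction l as [|x l IH]; intros H; simpl; [lia|].
  rewrite length_app. assert (c <= length (g x))%nat by (apply H; simpl; auto).
  assert (length l * c <= length (flat_map g l))%nat by (apply IH; intros; apply H; simpl; auto).
  lia.
Qed.

Lemma sum_indicator (g : nat -> bool) n :
  sum_f_R0 (fun j => if g j then 1 else 0) n = INR (length (filter g (seq 0 (S n)))).
Proof.
  induction n as [|n IH].
  - simpl. destruct (g 0%nat); simpl; lra.
  - rewrite seq_S, filter_app, length_app. simpl sum_f_R0. rewrite IH, plus_INR.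
    simpl. destruct (g (S n)); simpl; lra.
Qed.

Lemma sum_affine (f : nat -> R) c d n :
  sum_f_R0 (fun j => c + d * f j) n = c * INR (S n) + d * sum_f_R0 f n.
Proof.
  induction n as [|n IH]; [simpl; lra|]. simpl sum_f_R0. rewrite IH, (S_INR (S n)). lra.
Qed.

Definition block_bounded (a : seqR) (m : nat) (B : R) (x : nat) : bool :=
  forallb (fun j => rleb (Rabs (a (x * m + j)%nat)) B) (seq 0 m).

Definition block_exceed (a : seqR) (m : nat) (be : R) (x : nat) : list nat :=
  filter (fun j => negb (rleb (Rabs (a (x * m + j)%nat)) be)) (seq 0 m).

Lemma block_avg_le a m x be B : (1 <= m)%nat -> 0 <= be -> block_bounded a m B x = true ->
  Rabs (sigma_avg m a x) <= be + B * INR (length (block_exceed a m be x)) / INR m.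
Proof.
  intros Hm Hbe Hg. unfold sigma_avg.
  assert (HmR : 0 < INR m) by (apply lt_0_INR; lia).
  rewrite Rabs_mult, Rabs_right by (apply Rle_ge, Rlt_le, Rinv_0_lt_compat; lra).
  set (ind := fun j => negb (rleb (Rabs (a (x * m + j)%nat)) be)).
  assert (Hs : sum_f_R0 (fun j => Rabs (a (x * m + j)%nat)) (pred m) <=
               sum_f_R0 (fun j => be + B * (if ind j then 1 else 0)) (pred m)).
  { apply sum_Rle. intros j Hj.
    unfold block_bounded in Hg. rewrite forallb_forall in Hg.
    assert (Hin : In j (seq 0 m)) by (apply in_seq; lia).
    specialize (Hg j Hin). apply rleb_true in Hg.
    unfold ind. destruct (rleb (Rabs (a (x * m + j)%nat)) be) eqn:E; simpl.
    - apply rleb_true in E; lra.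
    - lra. }
  rewrite sum_affine, sum_indicator in Hs.
  replace (S (pred m)) with m in Hs by lia.
  change (filter ind (seq 0 m)) with (block_exceed a m be x) in Hs.
  assert (H1 := Rsum_abs (fun j => a (x * m + j)%nat) (pred m)). cbv beta in H1.
  apply Rle_trans with (/ INR m * (be * INR m + B * INR (length (block_exceed a m be x)))).
  - apply Rmult_le_compat_l; [apply Rlt_le, Rinv_0_lt_compat|]; lra.
  - right. field. lra.
Qed.

Lemma block_many_exceed a m x be B (h : nat) : (1 <= m)%nat -> 0 <= be -> 0 <= B ->
  block_bounded a m B x = true ->
  be + INR h / INR m * B < Rabs (sigma_avg m a x) ->
  (h < length (block_exceed a m be x))%nat.
Proof.
  intros Hm Hbe HB Hg Hlt.
  assert (H1 := block_avg_le a m x be B Hm Hbe Hg).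
  assert (HmR : 0 < INR m) by (apply lt_0_INR; lia).
  destruct (le_lt_dec (length (block_exceed a m be x)) h) as [Hc|Hc]; [exfalso|exact Hc].
  apply le_INR in Hc.
  assert (B * INR (length (block_exceed a m be x)) / INR m <= INR h / INR m * B).
  { unfold Rdiv. apply Rle_trans with (B * INR h * / INR m); [|right; ring].
    apply Rmult_le_compat_r; [apply Rlt_le, Rinv_0_lt_compat|]; nra. }
  lra.
Qed.

(* Blocks that are not [a^*_{i+1}]-bounded each contain an entry larger than
   [a^*_{i+1}], so there are at most [i] of them. *)
Lemma unbounded_blocks_count a m i L : sq_bounded a -> (1 <= m)%nat -> NoDup L ->
  (length (filter (fun x => negb (block_bounded a m (rearr a i) x)) L) <= i)%nat.
Proof.
  intros Hb Hm Hn. set (B := rearr a i).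
  set (bad := fun x j => negb (rleb (Rabs (a (x * m + j)%nat)) B)).
  set (w := fun x => (x * m + match find (bad x) (seq 0 m) with Some j => j | None => 0 end)%nat).
  assert (Hw : forall x, exists j, (j < m)%nat /\ w x = (x * m + j)%nat).
  { intros x. unfold w. destruct (find _ _) as [j|] eqn:E.
    - apply find_some in E as [E _]. apply in_seq in E. exists j; split; [lia|auto].
    - exists 0%nat; split; [lia|auto]. }
  rewrite <- (length_map w). apply (rearr_count a i Hb).
  - apply NoDup_map_NoDup_ForallPairs; [|apply NoDup_filter; auto].
    intros x y _ _ Hxy. destruct (Hw x) as [i' [Hi Ei]]. destruct (Hw y) as [j [Hj Ej]].
    rewrite Ei, Ej in Hxy. exact (block_index_inj x y i' j m Hi Hj Hxy).
  - apply Forall_forall. intros e He. apply in_map_iff in He as [x [<- Hx]].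
    apply filter_In in Hx as [_ Hx]. apply Bool.negb_true_iff in Hx.
    unfold w. destruct (find (bad x) (seq 0 m)) as [j|] eqn:E.
    + apply find_some in E as [_ E]. apply Bool.negb_true_iff, rleb_false in E. exact E.
    + exfalso. assert (Hn2 := find_none _ _ E).
      rewrite <- Bool.not_true_iff_false in Hx. apply Hx.
      apply forallb_forall. intros j Hj. specialize (Hn2 j Hj).
      apply Bool.negb_false_iff in Hn2. exact Hn2.
Qed.

(* If each of the distinct blocks in [L] has at least [h] entries exceeding
   [a^*_{i+1}], then altogether at most [i] such entries exist. *)
Lemma exceed_blocks_count a m i h L : sq_bounded a -> NoDup L ->
  (forall x, In x L -> (h <= length (block_exceed a m (rearr a i) x))%nat) ->
  (length L * h <= i)%nat.
Proof.
  intros Hb Hn Hh.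
  set (G := flat_map (fun x => map (fun j => (x * m + j)%nat) (block_exceed a m (rearr a i) x)) L).
  apply Nat.le_trans with (length G).
  { apply length_flat_map_ge. intros x Hx. rewrite length_map. auto. }
  apply (rearr_count a i Hb).
  - apply NoDup_flat_map_disjoint; auto.
    + intros x _. apply NoDup_map_NoDup_ForallPairs; [|apply NoDup_filter, seq_NoDup].
      intros j j' _ _ H; lia.
    + intros x y e _ _ Hx Hy. apply in_map_iff in Hx as [j [Hj Hj2]].
      apply in_map_iff in Hy as [j' [Hj' Hj'2]]. unfold block_exceed in Hj2, Hj'2.
      apply filter_In in Hj2 as [Hj2 _]. apply filter_In in Hj'2 as [Hj'2 _].
      apply in_seq in Hj2. apply in_seq in Hj'2.
      apply (block_index_inj x y j j' m); lia.
  - apply Forall_forall. intros e He.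
    apply in_flat_map in He as [x [_ He]]. apply in_map_iff in He as [j [<- Hj]].
    unfold block_exceed in Hj. apply filter_In in Hj as [_ Hj].
    apply Bool.negb_true_iff, rleb_false in Hj. exact Hj.
Qed.

(* Among more than [2^k - 1] blocks with large average, at most [2^(k-1) - 1]
   are unbounded, and each of the others carries more than [2*2^J] entries
   above [a^*_{2^(k+J)}]: too many in total. *)
Lemma sigma_count a m k J : sq_bounded a -> (1 <= m)%nat ->
  count_gt_le (sigma_avg m a)
    (rearr a (2^(k+J) - 1)%nat + 2 * 2^J / INR m * rearr a (2^(pred k) - 1)%nat) (2^k - 1)%nat.
Proof.
  intros Hb Hm L Hn Hf.
  set (be := rearr a (2^(k+J) - 1)%nat). set (B := rearr a (2^(pred k) - 1)%nat).
  rewrite Forall_forall in Hf.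
  set (Lg := filter (block_bounded a m B) L).
  set (Lb := filter (fun x => negb (block_bounded a m B x)) L).
  assert (Hlen := filter_length (block_bounded a m B) L). fold Lg Lb in Hlen.
  assert (Hbad : (length Lb <= 2^(pred k) - 1)%nat) by (apply unbounded_blocks_count; auto).
  assert (Hgood : (length Lg * S (2 * 2^J) <= 2^(k+J) - 1)%nat).
  { apply (exceed_blocks_count a m); auto; [apply NoDup_filter; auto|].
    intros x Hx. apply filter_In in Hx as [HxL Hgx].
    change (2 * 2^J < length (block_exceed a m be x))%nat.
    apply (block_many_exceed a m x be B); auto; try apply rearr_nonneg.
    replace (INR (2 * 2^J)) with (2 * 2^J)
      by (rewrite mult_INR, pow_INR; simpl; f_equal; f_equal; lra).
    apply Hf; auto. }
  assert (HP : (1 <= 2^(pred k))%nat) by (apply Nat.le_succ_l, Nat.neq_0_lt_0, Nat.pow_nonzero; lia).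
  assert (HQ : (1 <= 2^J)%nat) by (apply Nat.le_succ_l, Nat.neq_0_lt_0, Nat.pow_nonzero; lia).
  rewrite Nat.pow_add_r in Hgood.
  destruct (le_lt_dec (length L) (2^k - 1)) as [Hl|Hl]; [exact Hl|exfalso].
  destruct k as [|k]; simpl pred in *.
  - simpl in *. nia.
  - rewrite Nat.pow_succ_r' in Hl, Hgood. nia.
Qed.

(** * Shifts and operator norms *)

(* The left shift [tau_{-n}], without the index bookkeeping of [seq_shift]. *)
Definition lsh (n : nat) (x : seqR) : seqR := fun i => x (i + n)%nat.

Lemma seq_shift_neg n x : seq_shift (- Z.of_nat n)%Z x = lsh n x.
Proof.
  apply functional_extensionality; intros i. unfold seq_shift, lsh.
  replace (Z.of_nat i - - Z.of_nat n)%Z with (Z.of_nat (i + n)) by lia.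
  replace (0 <=? Z.of_nat (i + n))%Z with true by (symmetry; apply Z.leb_le; lia).
  rewrite Nat2Z.id. reflexivity.
Qed.

Lemma seq_shift_one x i : seq_shift 1%Z x i = match i with O => 0 | S i' => x i' end.
Proof.
  unfold seq_shift. destruct i as [|i]; [reflexivity|].
  replace (Z.of_nat (S i) - 1)%Z with (Z.of_nat i) by lia.
  replace (0 <=? Z.of_nat i)%Z with true by (symmetry; apply Z.leb_le; lia).
  rewrite Nat2Z.id. reflexivity.
Qed.

Lemma seq_shift_scal n c x : seq_shift n (sq_scal c x) = sq_scal c (seq_shift n x).
Proof.
  apply functional_extensionality; intros i. unfold seq_shift, sq_scal.
  destruct (0 <=? _)%Z; ring.
Qed.

(* [tau_{-qN}] is the [q]-th power of [tau_{-N}], so its norm is at most [rho^q]. *)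
Lemma lsh_iter E nE N rho : 0 <= rho ->
  (forall x, E x -> E (lsh N x) /\ nE (lsh N x) <= rho * nE x) ->
  forall q x, E x -> E (lsh (q * N) x) /\ nE (lsh (q * N) x) <= rho ^ q * nE x.
Proof.
  intros Hr H q. induction q as [|q IH]; intros x Hx.
  - replace (lsh (0 * N) x) with x
      by (apply functional_extensionality; intros i; unfold lsh; f_equal; lia).
    simpl. split; auto; lra.
  - replace (lsh (S q * N) x) with (lsh N (lsh (q * N) x))
      by (apply functional_extensionality; intros i; unfold lsh; f_equal; lia).
    destruct (IH x Hx) as [H1 H2]. destruct (H _ H1) as [H3 H4]. split; auto.
    simpl. apply Rle_trans with (rho * nE (lsh (q * N) x)); auto.
    rewrite Rmult_assoc. apply Rmult_le_compat_l; auto.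
Qed.

Lemma opnorm_bound E nE T : is_banach_seq_lattice E nE ->
  (forall c x, T (sq_scal c x) = sq_scal c (T x)) -> bounded_op E nE T ->
  forall x, E x -> E (T x) /\ nE (T x) <= opnorm E nE T * nE x.
Proof.
  intros HE Thom [C HC] x Hx.
  destruct HE as (_ & _ & Escal & Nnn & Nzero & Nhom & _).
  split; [apply HC; auto|].
  set (S := fun r => exists x, E x /\ nE x <= 1 /\ r = nE (T x)).
  assert (Hmem : forall r, S r -> r <= opnorm E nE T).
  { destruct (Lub_Rbar_correct S) as [Hu Hl].
    assert (Hfin : Rbar_le (Lub_Rbar S) (Rmax C 0)).
    { apply Hl. intros r [y [Hy [Hy1 ->]]]. destruct (HC y Hy) as [_ H].
      assert (0 <= nE y) by auto. simpl. apply Rle_trans with (C * nE y); auto.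
      destruct (Rle_dec 0 C).
      - rewrite Rmax_left by lra. replace C with (C * 1) at 2 by ring.
        apply Rmult_le_compat_l; auto.
      - rewrite Rmax_right by lra. nra. }
    intros r Hr. unfold opnorm. fold S. assert (H := Hu r Hr).
    destruct (Lub_Rbar S); simpl in *; try lra; contradiction. }
  destruct (Req_dec (nE x) 0) as [Hz|Hz].
  - (* then x = 0 * x, so T x = 0 * T x has norm 0 *)
    assert (Hx0 : x = sq_scal 0 x).
    { apply functional_extensionality; intros k. unfold sq_scal.
      rewrite (Nzero x Hx Hz k). ring. }
    rewrite Hz, Rmult_0_r, Hx0, Thom, Nhom by (apply HC; auto). rewrite Rabs_R0. lra.
  - assert (Hp : 0 < nE x) by (assert (0 <= nE x) by auto; lra).
    set (x' := sq_scal (/ nE x) x).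
    assert (Hx' : E x') by (apply Escal; auto).
    assert (Hn' : nE x' = 1).
    { unfold x'. rewrite Nhom by auto.
      rewrite Rabs_right by (apply Rle_ge, Rlt_le, Rinv_0_lt_compat; auto). field; lra. }
    assert (HS : S (nE (T x'))) by (exists x'; repeat split; auto; lra).
    specialize (Hmem _ HS). unfold x' in Hmem. rewrite Thom, Nhom in Hmem by (apply HC; auto).
    rewrite Rabs_right in Hmem by (apply Rle_ge, Rlt_le, Rinv_0_lt_compat; auto).
    apply Rmult_le_compat_r with (r := nE x) in Hmem; [|lra].
    replace (/ nE x * nE (T x) * nE x) with (nE (T x)) in Hmem by (field; lra).
    exact Hmem.
Qed.

Lemma opnorm_between X nX T B r0 :
  (forall x, X x -> nX x <= 1 -> nX (T x) <= B) ->
  (exists x, X x /\ nX x <= 1 /\ nX (T x) = r0) -> r0 <= opnorm X nX T <= B.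
Proof.
  intros HB [x0 [Hx0 [Hn0 Hr0]]]. unfold opnorm.
  set (S := fun r => exists x, X x /\ nX x <= 1 /\ r = nX (T x)).
  destruct (Lub_Rbar_correct S) as [Hu Hl].
  assert (H1 : Rbar_le (Lub_Rbar S) B).
  { apply Hl. intros r [x [Hx [Hn ->]]]. simpl. auto. }
  assert (H2 : Rbar_le r0 (Lub_Rbar S)) by (apply Hu; exists x0; auto).
  destruct (Lub_Rbar S); simpl in *; try contradiction; lra.
Qed.

Lemma contracting_left_shift E nE : Rbar_lt (k_minus E nE) 1 ->
  exists N, (1 <= N)%nat /\ 0 < opnorm E nE (seq_shift (- Z.of_nat N)%Z) < 1.
Proof.
  intros Hk. apply NNPP. intros H.
  assert (Hle : Rbar_le (Lim_seq (fun _ => 1)) (k_minus E nE)).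
  { unfold k_minus. apply Lim_seq_le_loc. exists 1%nat. intros n Hn1.
    set (x := opnorm E nE (seq_shift (- Z.of_nat n)%Z)).
    destruct (Rle_lt_dec 1 (Rpower x (/ INR n))) as [h|h]; auto.
    exfalso. apply H. exists n. split; auto.
    unfold Rpower in h. rewrite <- exp_0 in h. apply exp_lt_inv in h.
    assert (0 < / INR n) by (apply Rinv_0_lt_compat, lt_0_INR; lia).
    assert (Hl : ln x < 0) by nra.
    destruct (Rlt_dec 0 x) as [hp|hp].
    - split; auto. apply ln_lt_inv; auto; [lra|]. rewrite ln_1. exact Hl.
    - exfalso. unfold ln in Hl. destruct (Rlt_dec 0 x); [contradiction|lra]. }
  rewrite Lim_seq_const in Hle. destruct (k_minus E nE); simpl in *; lra.
Qed.

Lemma shift_constants E nE : is_banach_seq_lattice E nE ->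
  (forall n : Z, bounded_op E nE (seq_shift n)) -> Rbar_lt (k_minus E nE) 1 ->
  exists K1 N rho, 0 <= K1 /\ (1 <= N)%nat /\ 0 < rho < 1 /\
    (forall x, E x -> E (seq_shift 1 x) /\ nE (seq_shift 1 x) <= K1 * nE x) /\
    (forall x, E x -> E (lsh N x) /\ nE (lsh N x) <= rho * nE x).
Proof.
  intros HE Hsh Hk.
  assert (Hnrm : forall x, E x -> 0 <= nE x) by (destruct HE as (_ & _ & _ & Nnn & _); exact Nnn).
  destruct (contracting_left_shift E nE Hk) as [N [HN Hrho]].
  exists (Rmax (opnorm E nE (seq_shift 1)) 0), N, (opnorm E nE (seq_shift (- Z.of_nat N)%Z)).
  split; [apply Rmax_r|]. split; [exact HN|]. split; [exact Hrho|]. split.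
  - intros x Hx. destruct (opnorm_bound E nE _ HE (seq_shift_scal 1) (Hsh 1%Z) x Hx) as [H1 H2].
    split; auto. eapply Rle_trans; [exact H2|].
    apply Rmult_le_compat_r; [auto | apply Rmax_l].
  - intros x Hx. rewrite <- seq_shift_neg. apply opnorm_bound; auto using seq_shift_scal.
Qed.

(** * The averaging operator through the dyadic representation *)

(* Averaging preserves boundedness, so rearrangements of averages make sense. *)
Lemma sigma_bounded a m : (1 <= m)%nat -> sq_bounded a -> sq_bounded (sigma_avg m a).
Proof.
  intros Hm [M HM]. exists M. intros i. unfold sigma_avg.
  assert (HmR : 0 < INR m) by (apply lt_0_INR; lia).
  rewrite Rabs_mult, Rabs_right by (apply Rle_ge, Rlt_le, Rinv_0_lt_compat; lra).
  assert (H1 := Rsum_abs (fun j => a (i * m + j)%nat) (pred m)).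
  assert (H2 : sum_f_R0 (fun j => Rabs (a (i * m + j)%nat)) (pred m) <= sum_f_R0 (fun _ => M) (pred m))
    by (apply sum_Rle; intros; auto).
  rewrite sum_cte in H2. replace (S (pred m)) with m in H2 by lia.
  apply Rle_trans with (/ INR m * (M * INR m)).
  - apply Rmult_le_compat_l; [apply Rlt_le, Rinv_0_lt_compat|]; lra.
  - right; field; lra.
Qed.

Definition sigma_majorant (m J : nat) (b : seqR) : seqR :=
  sq_add (lsh J b) (sq_scal (2 * 2^J / INR m) (sq_add (seq_shift 1 b) b)).

(* Pointwise form of [sigma_count]: with [b_k = a^*_{2^k}], the entry
   [(sigma_{1/m} a)^*_{2^k}] is at most [b_{k+J} + (2*2^J/m) b_{k-1}], and
   [b_{k-1}] is bounded by [(tau_1 b)_k + b_k]. *)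
Lemma dyadic_sigma_dominated a m J : sq_bounded a -> (1 <= m)%nat ->
  forall k, Rabs (dyadic_seq (sigma_avg m a) k) <= Rabs (sigma_majorant m J (dyadic_seq a) k).
Proof.
  intros Hab Hm k. set (b := dyadic_seq a).
  assert (HmR : 0 < INR m) by (apply lt_0_INR; lia).
  set (co := 2 * 2^J / INR m).
  assert (Hco : 0 <= co).
  { unfold co, Rdiv. apply Rmult_le_pos; [|apply Rlt_le, Rinv_0_lt_compat; lra].
    apply Rmult_le_pos; [lra | apply pow_le; lra]. }
  assert (Hbnn : forall k, 0 <= b k) by (intros; apply rearr_nonneg).
  assert (Hshift : 0 <= seq_shift 1 b k) by (rewrite seq_shift_one; destruct k; [lra | apply Hbnn]).
  assert (Hpred : b (pred k) <= seq_shift 1 b k + b k).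
  { rewrite seq_shift_one. destruct k; simpl; [|specialize (Hbnn (S k))]; lra. }
  assert (Hmaj : sigma_majorant m J b k = b (k + J)%nat + co * (seq_shift 1 b k + b k))
    by reflexivity.
  assert (0 <= b (k + J)%nat) by apply Hbnn.
  rewrite Hmaj, Rabs_right by (apply Rle_ge, rearr_nonneg).
  rewrite Rabs_right by (apply Rle_ge; specialize (Hbnn k); nra).
  unfold dyadic_seq at 1. eapply Rle_trans.
  - apply rearr_le; [|apply (sigma_count a m k J Hab Hm)].
    apply Rplus_le_le_0_compat; [apply rearr_nonneg|].
    apply Rmult_le_pos; [exact Hco | apply rearr_nonneg].
  - apply Rplus_le_compat.
    + right; reflexivity.
    + apply Rmult_le_compat_l; auto.
Qed.

Lemma geometric_rate rho th K1 N m q : 0 <= rho <= th -> / 2^N <= th -> 0 <= K1 ->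
  (2^(q * (2 * N)) <= m)%nat ->
  rho ^ q + 2 * 2^(q * N) / INR m * (K1 + 1) <= th ^ q * (1 + 2 * (K1 + 1)).
Proof.
  intros Hrho Hth HK1 Hm.
  set (P := 2^(q * N)).
  assert (HP : 0 < P) by (apply pow_lt; lra).
  assert (Hm2 : P * P <= INR m).
  { apply Rle_trans with (INR (2^(q * (2 * N)))); [|apply le_INR; exact Hm].
    rewrite pow_INR. simpl INR. unfold P. rewrite <- pow_add.
    replace (1 + 1) with 2 by ring. right. f_equal. lia. }
  assert (HPi : / P <= th ^ q).
  { replace (/ P) with ((/ 2^N) ^ q)
      by (rewrite pow_inv; unfold P; rewrite <- pow_mult; f_equal; f_equal; lia).
    apply pow_incr. split; [apply Rlt_le, Rinv_0_lt_compat, pow_lt|]; lra. }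
  assert (HPm : P / INR m <= / P).
  { apply Rle_trans with (P / (P * P)).
    - unfold Rdiv. apply Rmult_le_compat_l; [lra|]. apply Rinv_le_contravar; nra.
    - right. field. lra. }
  assert (Hrq : rho ^ q <= th ^ q) by (apply pow_incr; lra).
  replace (2 * P / INR m * (K1 + 1)) with (2 * (P / INR m) * (K1 + 1)) by (unfold Rdiv; ring).
  assert (P / INR m * (K1 + 1) <= th ^ q * (K1 + 1)) by (apply Rmult_le_compat_r; lra).
  lra.
Qed.

Section SigmaEstimate.

Variables (X : seqR -> Prop) (nX : seqR -> R) (E : seqR -> Prop) (nE : seqR -> R).
Hypothesis HX : is_symmetric_seq_space X nX.
Hypothesis HE : is_banach_seq_lattice E nE.
Hypothesis Hchar : forall a, sq_bounded a -> (X a <-> E (dyadic_seq a)).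
Variables c C : R.
Hypothesis Hc : 0 < c.
Hypothesis HC : 0 < C.
Hypothesis Hequiv :
  forall a, X a -> c * nE (dyadic_seq a) <= nX a /\ nX a <= C * nE (dyadic_seq a).
Variable K1 : R.
Hypothesis HK1 : 0 <= K1.
Hypothesis Hsh1 : forall x, E x -> E (seq_shift 1 x) /\ nE (seq_shift 1 x) <= K1 * nE x.

Lemma sigma_majorant_norm m J b : (1 <= m)%nat -> E b -> E (lsh J b) ->
  E (sigma_majorant m J b) /\
  nE (sigma_majorant m J b) <= nE (lsh J b) + 2 * 2^J / INR m * (K1 + 1) * nE b.
Proof.
  intros Hm Eb EJ.
  destruct HE as (_ & Eadd & Escal & Nnn & _ & Nhom & Ntri & _).
  destruct (Hsh1 b Eb) as [E1 N1].
  assert (Hco : 0 <= 2 * 2^J / INR m).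
  { unfold Rdiv. apply Rmult_le_pos; [|apply Rlt_le, Rinv_0_lt_compat, lt_0_INR; lia].
    apply Rmult_le_pos; [lra | apply pow_le; lra]. }
  unfold sigma_majorant. split; [apply Eadd; auto|].
  eapply Rle_trans; [apply Ntri; auto|]. apply Rplus_le_compat_l.
  rewrite Nhom, Rabs_right by (auto || lra).
  rewrite Rmult_assoc. apply Rmult_le_compat_l; auto.
  eapply Rle_trans; [apply Ntri; auto|]. lra.
Qed.

Lemma sigma_dyadic_norm a m J : X a -> (1 <= m)%nat -> E (lsh J (dyadic_seq a)) ->
  X (sigma_avg m a) /\
  nE (dyadic_seq (sigma_avg m a)) <=
    nE (lsh J (dyadic_seq a)) + 2 * 2^J / INR m * (K1 + 1) * nE (dyadic_seq a).
Proof.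
  intros Ha Hm EJ.
  assert (Hab : sq_bounded a) by (destruct HX as (_ & _ & Xbd & _); auto).
  assert (Eb : E (dyadic_seq a)) by (apply Hchar; auto).
  destruct (sigma_majorant_norm m J (dyadic_seq a) Hm Eb EJ) as [EY NY].
  destruct HE as (_ & _ & _ & _ & _ & _ & _ & _ & Nlat).
  destruct (Nlat _ _ EY (dyadic_sigma_dominated a m J Hab Hm)) as [ED ND].
  split; [apply Hchar; auto; apply sigma_bounded; auto | lra].
Qed.

Lemma sigma_in_X a m : X a -> (1 <= m)%nat -> X (sigma_avg m a).
Proof.
  intros Ha Hm. apply (sigma_dyadic_norm a m 0); auto.
  assert (Hab : sq_bounded a) by (destruct HX as (_ & _ & Xbd & _); auto).
  replace (lsh 0 (dyadic_seq a)) with (dyadic_seq a)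
    by (apply functional_extensionality; intros i; unfold lsh; f_equal; lia).
  apply Hchar; auto.
Qed.

Lemma sigma_norm_estimate N rho : 0 <= rho ->
  (forall x, E x -> E (lsh N x) /\ nE (lsh N x) <= rho * nE x) ->
  forall a m q, X a -> (1 <= m)%nat ->
  nX (sigma_avg m a) <= C / c * (rho ^ q + 2 * 2^(q * N) / INR m * (K1 + 1)) * nX a.
Proof.
  intros Hrho Hit a m q Ha Hm.
  assert (Hab : sq_bounded a) by (destruct HX as (_ & _ & Xbd & _); auto).
  set (b := dyadic_seq a).
  assert (Eb : E b) by (apply Hchar; auto).
  destruct (lsh_iter E nE N rho Hrho Hit q b Eb) as [EJ NJ].
  destruct (sigma_dyadic_norm a m (q * N) Ha Hm EJ) as [XS NS].
  destruct (Hequiv _ XS) as [_ H1]. destruct (Hequiv _ Ha) as [H2 _].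
  assert (Hnb : 0 <= nE b) by (destruct HE as (_ & _ & _ & Nnn & _); auto).
  set (T := rho ^ q + 2 * 2^(q * N) / INR m * (K1 + 1)).
  fold b in NS, H2.
  assert (HT : nE (dyadic_seq (sigma_avg m a)) <= T * nE b)
    by (unfold T; rewrite Rmult_plus_distr_r; lra).
  assert (Hb : nE b <= nX a / c).
  { apply Rmult_le_reg_l with c; auto.
    replace (c * (nX a / c)) with (nX a) by (field; lra). lra. }
  assert (HT0 : 0 <= T).
  { unfold T. apply Rplus_le_le_0_compat; [apply pow_le; auto|].
    apply Rmult_le_pos; [|lra]. unfold Rdiv. apply Rmult_le_pos;
      [apply Rmult_le_pos; [lra | apply pow_le; lra] | apply Rlt_le, Rinv_0_lt_compat, lt_0_INR; lia]. }
  apply Rle_trans with (C * nE (dyadic_seq (sigma_avg m a))); [exact H1|].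
  apply Rle_trans with (C * (T * (nX a / c))).
  - apply Rmult_le_compat_l; [lra|].
    apply Rle_trans with (T * nE b); [exact HT | apply Rmult_le_compat_l; auto].
  - right. field. lra.
Qed.

Lemma sigma_geometric_decay N rho th : 0 <= rho <= th -> / 2^N <= th ->
  (forall x, E x -> E (lsh N x) /\ nE (lsh N x) <= rho * nE x) ->
  forall m q, (2^(q * (2 * N)) <= m)%nat ->
  forall a, X a -> nX a <= 1 -> nX (sigma_avg m a) <= C / c * (1 + 2 * (K1 + 1)) * th ^ q.
Proof.
  intros Hrho Hth Hcontr m q Hq a Ha Ha1.
  assert (Hm : (1 <= m)%nat)
    by (assert (0 < 2^(q * (2 * N)))%nat by (apply Nat.neq_0_lt_0, Nat.pow_nonzero; lia); lia).
  assert (Hrate := geometric_rate rho th K1 N m q Hrho Hth HK1 Hq).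
  assert (Hest := sigma_norm_estimate N rho (proj1 Hrho) Hcontr a m q Ha Hm).
  assert (0 <= nX a) by (destruct HX as ((_ & _ & _ & XN & _) & _); auto).
  assert (0 < C / c) by (apply Rdiv_lt_0_compat; auto).
  assert (0 < th ^ q)
    by (apply pow_lt, Rlt_le_trans with (/ 2^N); auto; apply Rinv_0_lt_compat, pow_lt; lra).
  set (K := C / c * (1 + 2 * (K1 + 1)) * th ^ q).
  assert (0 <= K) by (unfold K; apply Rmult_le_pos; [apply Rmult_le_pos|]; lra).
  apply Rle_trans with (K * nX a); [|nra].
  eapply Rle_trans; [exact Hest|].
  apply Rmult_le_compat_r; auto. unfold K. rewrite Rmult_assoc.
  apply Rmult_le_compat_l; lra.
Qed.

End SigmaEstimate.

(** * Power decay of the averaging operators gives a positive Boyd index *)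

Lemma sum_ge_term f n j :
  (forall i, (i <= n)%nat -> 0 <= f i) -> (j <= n)%nat -> f j <= sum_f_R0 f n.
Proof.
  revert j; induction n as [|n IH]; intros j H Hj.
  - replace j with 0%nat by lia. simpl; apply Rle_refl.
  - simpl. destruct (Nat.eq_dec j (S n)) as [->|Hne].
    + assert (0 <= sum_f_R0 f n).
      { apply Rle_trans with (f 0%nat); [apply H; lia | apply IH; [intros; apply H; lia | lia]]. }
      lra.
    + assert (f j <= sum_f_R0 f n) by (apply IH; [intros; apply H; lia | lia]).
      assert (0 <= f (S n)) by (apply H; lia). lra.
Qed.

(* In a nontrivial symmetric space [sigma_{1/m}] does not vanish on the unit
   ball: average a normalized nonnegative one-point sequence. This keeps
   [ln ||sigma_{1/m}||] meaningful. *)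
Lemma sigma_nonvanishing X nX m : is_symmetric_seq_space X nX -> (1 <= m)%nat ->
  (forall a, X a -> X (sigma_avg m a)) ->
  exists x, X x /\ nX x <= 1 /\ 0 < nX (sigma_avg m x).
Proof.
  intros HX Hm Hsig.
  destruct HX as ((_ & _ & Xscal & Xnn & Xzero & Xhom & _ & _ & Xlat) & [x0 [Hx0 [k0 Hk0]]] & _).
  set (y := fun k => if Nat.eqb k k0 then Rabs (x0 k0) else 0).
  assert (Hypos : 0 < Rabs (x0 k0)) by (apply Rabs_pos_lt; auto).
  assert (Hy0 : forall k, 0 <= y k) by (intros k; unfold y; destruct (Nat.eqb k k0); [apply Rabs_pos | lra]).
  assert (Hy : X y).
  { apply (Xlat x0 y Hx0). intros k. unfold y. destruct (Nat.eqb_spec k k0).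
    - subst. rewrite Rabs_Rabsolu. lra.
    - rewrite Rabs_R0. apply Rabs_pos. }
  assert (HnY : 0 < nX y).
  { destruct (Req_dec (nX y) 0) as [H0|H0]; [|assert (0 <= nX y) by auto; lra].
    exfalso. assert (H1 := Xzero y Hy H0 k0). unfold y in H1. rewrite Nat.eqb_refl in H1. lra. }
  set (z := sq_scal (/ nX y) y).
  assert (Hz0 : forall i, 0 <= z i)
    by (intros i; unfold z, sq_scal; apply Rmult_le_pos; auto; apply Rlt_le, Rinv_0_lt_compat; auto).
  assert (Hzk : 0 < z k0).
  { unfold z, sq_scal, y. rewrite Nat.eqb_refl. apply Rmult_lt_0_compat; auto.
    apply Rinv_0_lt_compat; auto. }
  assert (Hz : X z) by (apply Xscal; auto).
  exists z. split; auto. split.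
  { unfold z. rewrite Xhom by auto.
    rewrite Rabs_right by (apply Rle_ge, Rlt_le, Rinv_0_lt_compat; auto).
    right. field. lra. }
  (* the block containing k0 has average at least z k0 / m > 0 *)
  assert (Hsz := Hsig z Hz).
  destruct (Req_dec (nX (sigma_avg m z)) 0) as [H0|H0];
    [exfalso | assert (0 <= nX (sigma_avg m z)) by auto; lra].
  assert (H1 := Xzero _ Hsz H0 (k0 / m)%nat). unfold sigma_avg in H1.
  assert (Hdm : (k0 / m * m + k0 mod m)%nat = k0)
    by (rewrite Nat.mul_comm; symmetry; apply Nat.div_mod; lia).
  assert (Hmod : (k0 mod m <= pred m)%nat)
    by (assert (k0 mod m < m)%nat by (apply Nat.mod_upper_bound; lia); lia).
  assert (Hge := sum_ge_term (fun j => z (k0 / m * m + j)%nat) (pred m) (k0 mod m)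
                  (fun i _ => Hz0 _) Hmod).
  simpl in Hge. rewrite Hdm in Hge.
  assert (0 < / INR m) by (apply Rinv_0_lt_compat, lt_0_INR; lia).
  nra.
Qed.

Lemma is_lim_seq_log_ratio A d : is_lim_seq (fun m => A / ln (INR m) - d) (- d).
Proof.
  assert (H1 : is_lim_seq (fun m => ln (INR m)) p_infty)
    by exact (filterlim_comp _ _ _ INR ln _ _ _ is_lim_seq_INR is_lim_ln_p).
  assert (H2 := is_lim_seq_inv _ _ H1 ltac:(discriminate)). simpl in H2.
  assert (H3 := is_lim_seq_plus' _ _ _ _ (is_lim_seq_scal_l _ A _ H2) (is_lim_seq_const (- d))).
  replace (- d) with (A * 0 + - d) by ring.
  eapply is_lim_seq_ext; [|exact H3]. intros n. simpl. unfold Rdiv. ring.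
Qed.

Lemma dyadic_window m P : (1 <= m)%nat -> (1 <= P)%nat ->
  exists q, (2^(q * P) <= m)%nat /\ (m < 2^((q + 1) * P))%nat.
Proof.
  intros Hm HP. exists (Nat.log2 m / P)%nat.
  assert (Hlg := Nat.log2_spec m ltac:(lia)).
  assert (Hdiv := Nat.div_mod (Nat.log2 m) P ltac:(lia)).
  assert (Hmod := Nat.mod_upper_bound (Nat.log2 m) P ltac:(lia)).
  split.
  - apply Nat.le_trans with (2^(Nat.log2 m))%nat; [apply Nat.pow_le_mono_r; nia | lia].
  - apply Nat.lt_le_trans with (2^(S (Nat.log2 m)))%nat; [lia | apply Nat.pow_le_mono_r; nia].
Qed.

Lemma log_ratio_bound op K0 th s L (q : nat) : 0 < op -> op <= K0 * th ^ q -> 0 < th < 1 ->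
  0 < s -> 0 < L -> L < (INR q + 1) * s ->
  ln op / L <= (ln K0 - ln th) / L - (- ln th) / s.
Proof.
  intros Hop Hle Hth Hs HL HLs.
  assert (Hthq : 0 < th ^ q) by (apply pow_lt; lra).
  assert (HK0 : 0 < K0) by (apply Rmult_lt_reg_r with (th ^ q); lra).
  assert (Hlnop : ln op <= ln K0 + INR q * ln th).
  { rewrite <- ln_pow, <- ln_mult by lra. apply ln_le; auto. }
  assert (Ht : 0 < - ln th) by (assert (ln th < 0) by (rewrite <- ln_1; apply ln_increasing; lra); lra).
  assert (Hkey : - ln th / s * L <= (INR q + 1) * - ln th).
  { apply Rle_trans with (- ln th / s * ((INR q + 1) * s)).
    - apply Rmult_le_compat_l; [apply Rlt_le, Rdiv_lt_0_compat|]; lra.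
    - right. field. lra. }
  apply Rmult_le_reg_r with L; auto.
  replace (((ln K0 - ln th) / L - - ln th / s) * L) with (ln K0 - ln th - - ln th / s * L)
    by (field; lra).
  replace (ln op / L * L) with (ln op) by (field; lra).
  nra.
Qed.

(* If [||sigma_{1/m} a||_X <= K0 th^q] on the unit ball whenever
   [m >= 2^(qP)], then [||sigma_{1/m}||_X = O(m^(-d))] with
   [d = -ln th / (P ln 2)], so [alpha_X >= d > 0]. *)
Lemma boyd_alpha_pos_of_decay X nX (P : nat) K0 th :
  is_symmetric_seq_space X nX -> (1 <= P)%nat -> 0 < th < 1 ->
  (forall m a, (1 <= m)%nat -> X a -> X (sigma_avg m a)) ->
  (forall m q, (2^(q * P) <= m)%nat ->
     forall a, X a -> nX a <= 1 -> nX (sigma_avg m a) <= K0 * th ^ q) ->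
  Rbar_lt 0 (boyd_alpha X nX).
Proof.
  intros HX HP Hth Hsig Hdecay.
  set (s := INR P * ln 2).
  assert (Hs : 0 < s).
  { unfold s. apply Rmult_lt_0_compat; [apply lt_0_INR; lia|].
    rewrite <- ln_1. apply ln_increasing; lra. }
  set (d := - ln th / s).
  assert (Hd : 0 < d).
  { unfold d. apply Rdiv_lt_0_compat; auto.
    assert (ln th < ln 1) by (apply ln_increasing; lra). rewrite ln_1 in *. lra. }
  set (A := ln K0 - ln th).
  assert (Hev : forall m, (2 <= m)%nat ->
      ln (opnorm X nX (sigma_avg m)) / ln (INR m) <= A / ln (INR m) - d).
  { intros m Hm2.
    destruct (dyadic_window m P ltac:(lia) HP) as [q [Hq1 Hq2]].
    destruct (sigma_nonvanishing X nX m HX ltac:(lia) (fun a => Hsig m a ltac:(lia)))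
      as [x [Hx [Hx1 Hxp]]].
    destruct (opnorm_between X nX (sigma_avg m) (K0 * th ^ q) _ (Hdecay m q Hq1)
       (ex_intro _ x (conj Hx (conj Hx1 eq_refl)))) as [Hlo Hhi].
    assert (HmR : 1 < INR m) by (apply (lt_INR 1); lia).
    apply (log_ratio_bound _ _ _ _ _ q); auto; try lra.
    - rewrite <- ln_1. apply ln_increasing; lra.
    - apply Rlt_le_trans with (ln (INR (2^((q + 1) * P)))).
      + apply ln_increasing; [lra|]. apply lt_INR; exact Hq2.
      + rewrite pow_INR, ln_pow by (simpl; lra). unfold s.
        rewrite mult_INR, plus_INR. simpl INR. replace (1 + 1) with 2 by ring. right. ring. }
  assert (Hlim : Rbar_le (Lim_seq (fun m => ln (opnorm X nX (sigma_avg m)) / ln (INR m))) (- d)).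
  { rewrite <- (is_lim_seq_unique _ _ (is_lim_seq_log_ratio A d)).
    apply Lim_seq_le_loc. exists 2%nat. intros; apply Hev; auto. }
  unfold boyd_alpha. destruct (Lim_seq _); simpl in *; auto; lra.
Qed.

Lemma decay_ratio_bounds rho N : 0 < rho < 1 -> (1 <= N)%nat -> 0 < Rmax rho (/ 2^N) < 1.
Proof.
  intros Hrho HN.
  assert (H2N : 2 <= 2^N) by (replace 2 with (2^1) at 1 by ring; apply Rle_pow; [lra | lia]).
  assert (/ 2^N < 1) by (apply Rle_lt_trans with (/ 2); [apply Rinv_le_contravar|]; lra).
  split; [apply Rlt_le_trans with rho; [lra | apply Rmax_l] | apply Rmax_lub_lt; lra].
Qed.

Theorem corollary4p3
  (X : seqR -> Prop) (nX : seqR -> R) (E : seqR -> Prop) (nE : seqR -> R) :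
  is_symmetric_seq_space X nX ->
  is_banach_seq_lattice E nE ->
  (forall n : Z, bounded_op E nE (seq_shift n)) ->
  Rbar_lt (k_minus E nE) 1 ->
  (forall a : seqR, sq_bounded a -> (X a <-> E (dyadic_seq a))) ->
  (exists c C : R, 0 < c /\ 0 < C /\
     forall a : seqR, X a ->
       c * nE (dyadic_seq a) <= nX a /\ nX a <= C * nE (dyadic_seq a)) ->
  Rbar_lt 0 (boyd_alpha X nX).
Proof.
  intros HX HE Hsh Hk Hchar [c [C [Hc [HC Hequiv]]]].
  destruct (shift_constants E nE HE Hsh Hk)
    as (K1 & N & rho & HK1 & HN & Hrho & Hsh1 & Hcontr).
  apply (boyd_alpha_pos_of_decay X nX (2 * N) (C / c * (1 + 2 * (K1 + 1))) (Rmax rho (/ 2^N))).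
  - exact HX.
  - lia.
  - apply decay_ratio_bounds; auto.
  - intros m a Hm Ha. exact (sigma_in_X X nX E nE HX HE Hchar K1 Hsh1 a m Ha Hm).
  - exact (sigma_geometric_decay X nX E nE HX HE Hchar c C Hc HC Hequiv K1 HK1 Hsh1
             N rho _ (conj (Rlt_le _ _ (proj1 Hrho)) (Rmax_l _ _)) (Rmax_r _ _) Hcontr).
Qed.
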